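(* Let $q \in C^1(\mathbb{R}^n,\mathbb{R})$ be a scalar function, and let $A$, $B$ and $D$ be linear differential operators with constant coefficients on functions $\mathbb{R}^n\to\mathbb{R}$ with $D = A + B$. Suppose there exist natural numbers $\lambda$ and $k$ and a sufficiently smooth function $W:\mathbb{R}^n\to\mathbb{R}$ such that $$A^{\lambda+k} W(\mathbf{x}) = q(\mathbf{x}) \quad\text{(integration condition)},\qquad B^{\lambda+1} W(\mathbf{x}) = 0 \quad\text{(annihilator condition)}.$$ Define $$Q(\mathbf{x}) := \sum_{p=0}^{\lambda} (-1)^p \binom{k+p-1}{p} A^{\lambda-p} B^p W(\mathbf{x}).$$ Then $D^k Q = q$.
   Context: Powers of operators denote repeated application, with $A^0$, $B^0$, $D^0$ the identity. *)

From HB Require Import structures.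
From mathcomp Require Import all_boot all_order all_algebra.
From mathcomp Require Import all_classical all_reals all_analysis.
Set Implicit Arguments. Unset Strict Implicit. Unset Printing Implicit Defensive.
Import Order.TTheory GRing.Theory Num.Theory.
Import numFieldNormedType.Exports.
Local Open Scope ring_scope.

Definition partial {R : realType} {n : nat} (i : 'I_n)
  (f : 'rV[R]_n -> R) : 'rV[R]_n -> R :=
  fun x => derive f x (delta_mx 0 i).

Definition dmon {R : realType} {n : nat} (alpha : 'I_n -> nat)
  (f : 'rV[R]_n -> R) : 'rV[R]_n -> R :=
  foldr (fun i g => iter (alpha i) (partial i) g) f (enum 'I_n).

(* A linear differential operator with constant coefficients:
   a finite formal sum  sum_t c_t d^{alpha_t}. *)
Definition diffop (R : realType) (n : nat) := seq (R * ('I_n -> nat)).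

Definition apply_op {R : realType} {n : nat} (L : diffop R n)
  (f : 'rV[R]_n -> R) : 'rV[R]_n -> R :=
  fun x => \sum_(t <- L) t.1 * dmon t.2 f x.

Definition op_pow {R : realType} {n : nat} (L : diffop R n) (p : nat)
  (f : 'rV[R]_n -> R) : 'rV[R]_n -> R := iter p (apply_op L) f.

Definition partials {R : realType} {n : nat} (s : seq 'I_n)
  (f : 'rV[R]_n -> R) : 'rV[R]_n -> R :=
  foldr partial f s.

(* C^infinity: every iterated partial derivative exists and is differentiable
   (hence all partial derivatives of all orders exist and are continuous). *)
Definition smooth {R : realType} {n : nat} (f : 'rV[R]_n -> R) : Prop :=
  forall (s : seq 'I_n) (x : 'rV[R]_n), differentiable (partials s f) x.

Definition C1 {R : realType} {n : nat} (f : 'rV[R]_n -> R) : Prop :=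
  (forall x : 'rV[R]_n, differentiable f x) /\
  (forall i : 'I_n, continuous (partial i f)).

From HB Require Import structures.
From mathcomp Require Import all_boot all_order all_algebra.
From mathcomp Require Import all_classical all_reals all_analysis.
From mathcomp Require Import ring.
Import Order.TTheory GRing.Theory Num.Theory.
Import numFieldNormedType.Exports.
Local Open Scope ring_scope.

(* Put Q_m := \sum_(p <= lambda) (-1)^p C(m+p-1, p) A^(lambda-p) B^p W, so that
   the function in the theorem is Q_k.  Since A and B commute on smooth functions
   (Schwarz's theorem on mixed partial derivatives), Pascal's rule for these
   coefficients together with B^(lambda+1) W = 0 gives D Q_(m+1) = A Q_m.  Hence
   D^k Q_k = A^k Q_0 = A^(lambda+k) W = q. *)

Section Schwarz.
Context {R : realType} {V : normedModType R}.
Implicit Types (f F G : V -> R) (x u v : V).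

Lemma is_derive_line f x u (s : R) :
  derivable f (x + s *: u) u ->
  is_derive s 1 (fun t : R => f (x + t *: u)) ('D_u f (x + s *: u)).
Proof.
move=> dfu.
have quotE : (fun h : R => h^-1 *: (((fun t => f (x + t *: u)) \o shift s) (h *: 1)
                 - f (x + s *: u)))
           = (fun h : R => h^-1 *: ((f \o shift (x + s *: u)) (h *: u) - f (x + s *: u))).
  apply/funext => h /=; congr (_ *: (f _ - _)).
  by rewrite /shift /= [h *: 1]mulr1 scalerDl addrCA.
by constructor; rewrite /derivable /derive quotE.
Qed.

Lemma MVT_0 (g dg : R -> R) (h : R) : 0 < h ->
  (forall t, is_derive t (1 : R) g (dg t)) ->
  exists2 c, 0 < c < h & g h - g 0 = h * dg c.
Proof.
move=> h0 dg0.
have [|c c0h ->] := MVT h0 (fun t _ => dg0 t).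
  by apply: derivable_within_continuous => t _; case: (dg0 t).
by exists c; [rewrite in_itv in c0h | rewrite subr0 mulrC].
Qed.

Lemma second_difference_MVT f x u v (h : R) : 0 < h ->
  (forall y, derivable f y u) -> (forall y, derivable ('D_u f) y v) ->
  exists s t, [/\ 0 < s < h, 0 < t < h &
    f (x + h *: v + h *: u) - f (x + h *: u) - (f (x + h *: v) - f x)
      = h ^+ 2 * 'D_v ('D_u f) (x + s *: u + t *: v)].
Proof.
move=> h0 du dvu.
have [s s0h E1] := MVT_0
  (fun t => f (x + h *: v + t *: u) - f (x + t *: u))
  (fun t => 'D_u f (x + h *: v + t *: u) - 'D_u f (x + t *: u)) h h0
  (fun t => is_deriveB (is_derive_line _ _ _ _ (du _)) (is_derive_line _ _ _ _ (du _))).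
have [t t0h E2] := MVT_0
  (fun t => 'D_u f (x + s *: u + t *: v))
  (fun t => 'D_v ('D_u f) (x + s *: u + t *: v)) h h0
  (fun t => is_derive_line _ _ _ _ (dvu _)).
exists s, t; split => //.
move: E1 E2; rewrite !scale0r !addr0 => ->.
by rewrite [x + h *: v + s *: u]addrAC => ->; rewrite expr2 mulrA.
Qed.

Lemma mixed_derivatives_meet f x u v (d : R) : 0 < d ->
  (forall y, derivable f y u) -> (forall y, derivable f y v) ->
  (forall y, derivable ('D_u f) y v) -> (forall y, derivable ('D_v f) y u) ->
  exists y z, [/\ `|x - y| < d, `|x - z| < d & 'D_v ('D_u f) y = 'D_u ('D_v f) z].
Proof.
move=> d0 du dv duv dvu.
set h := d / (`|u| + `|v| + 1).
have h0 : 0 < h by rewrite divr_gt0 // ltr_wpDl // addr_ge0.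
have near_x s t u' v' : 0 < s < h -> 0 < t < h -> `|u'| + `|v'| = `|u| + `|v| ->
    `|x - (x + s *: u' + t *: v')| < d.
  move=> /andP[s0 sh] /andP[t0 th] uv.
  rewrite -addrA opprD addrA subrr sub0r normrN.
  apply: le_lt_trans (ler_normD _ _) _; rewrite !normrZ !gtr0_norm //.
  apply: (@le_lt_trans _ _ (h * (`|u'| + `|v'|))).
    by rewrite mulrDr lerD // ler_wpM2r // ltW.
  rewrite uv /h -mulrA -[ltRHS]mulr1 ltr_pM2l // mulrC ltr_pdivrMr ?ltr_wpDl ?addr_ge0 //.
  by rewrite mul1r ltrDl.
have [s [t [s0h t0h E1]]] := second_difference_MVT f x u v h h0 du duv.
have [s' [t' [s0h' t0h' E2]]] := second_difference_MVT f x v u h h0 dv dvu.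
exists (x + s *: u + t *: v), (x + s' *: v + t' *: u); split.
- exact: near_x.
- by apply: near_x; rewrite // addrC.
- apply: (mulfI (expf_neq0 2 (lt0r_neq0 h0))); rewrite -E1 -E2.
  rewrite [x + h *: v + h *: u]addrAC.
  move: (f (x + h *: u + h *: v)) (f (x + h *: u)) (f (x + h *: v)) (f x) => a b c e.
  ring.
Qed.

Lemma continuous_meet_eq F G x :
  {for x, continuous F} -> {for x, continuous G} ->
  (forall d, 0 < d -> exists y z, [/\ `|x - y| < d, `|x - z| < d & F y = G z]) ->
  F x = G x.
Proof.
move=> cF cG meet; apply/eqP; rewrite -subr_eq0 -normr_le0.
apply/ler_addgt0Pr => e e0; rewrite add0r.
have e20 : 0 < e / 2 by rewrite divr_gt0.
have [d1 /= d10 nearF] := (nbhs_normP _ _).1 (cvgr_dist_lt _ _ cF _ e20).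
have [d2 /= d20 nearG] := (nbhs_normP _ _).1 (cvgr_dist_lt _ _ cG _ e20).
have d0 : 0 < Num.min d1 d2 by rewrite lt_min d10 d20.
have [y [z [xy xz FGyz]]] := meet _ d0.
move: xy xz; rewrite !lt_min => /andP[/nearF/ltW Fy _] /andP[_ /nearG/ltW Gz].
rewrite (le_trans (ler_distD (F y) _ _)) // {2}FGyz (distrC (G z)) [e]splitr.
exact: lerD.
Qed.

Lemma schwarz f x u v :
  (forall y, derivable f y u) -> (forall y, derivable f y v) ->
  (forall y, derivable ('D_u f) y v) -> (forall y, derivable ('D_v f) y u) ->
  {for x, continuous ('D_v ('D_u f))} -> {for x, continuous ('D_u ('D_v f))} ->
  'D_v ('D_u f) x = 'D_u ('D_v f) x.
Proof.
move=> du dv duv dvu cuv cvu; apply: (continuous_meet_eq _ _ _ cuv cvu) => d d0.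
exact: mixed_derivatives_meet.
Qed.

End Schwarz.

Section LinearCombination.
Context {R : realType} {V : normedModType R}.

Definition lincomb {I : Type} (r : seq I) (c : I -> R) (F : I -> V -> R) : V -> R :=
  fun x => \sum_(j <- r) c j * F j x.

Lemma lincomb_cons {I : Type} (j : I) r c F :
  lincomb (j :: r) c F = c j \*: F j + lincomb r c F.
Proof. by apply/funext => y; rewrite /lincomb big_cons. Qed.

Lemma lincomb_nil {I : Type} c F : lincomb (Nil I) c F = cst 0.
Proof. by apply/funext => y; rewrite /lincomb big_nil. Qed.

Lemma is_derive_lincomb {I : Type} (r : seq I) c F x v :
  (forall j, derivable (F j) x v) ->
  is_derive x v (lincomb r c F) (\sum_(j <- r) c j * 'D_v (F j) x).
Proof.
move=> dF; elim: r => [|j r IH]; first by rewrite lincomb_nil big_nil; exact: is_derive_cst.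
rewrite lincomb_cons big_cons; apply: is_deriveD => //.
exact: is_deriveZ (derivableP (dF j)).
Qed.

Lemma differentiable_lincomb {I : Type} (r : seq I) c F x :
  (forall j, differentiable (F j) x) -> differentiable (lincomb r c F) x.
Proof.
move=> dF; elim: r => [|j r IH]; first by rewrite lincomb_nil; exact: differentiable_cst.
by rewrite lincomb_cons; apply: differentiableD => //; exact: differentiableZ.
Qed.

End LinearCombination.

Section SmoothFunctions.
Context {R : realType} {n : nat}.
Implicit Types (f : 'rV[R]_n -> R) (i : 'I_n) (s t : seq 'I_n).

Lemma smooth_partials s f : smooth f -> smooth (partials s f).
Proof. by move=> sf t x; rewrite /partials -foldr_cat; apply: sf. Qed.

Lemma smooth_partial i f : smooth f -> smooth (partial i f).
Proof. exact: (smooth_partials [:: i]). Qed.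

Lemma smooth_differentiable f x : smooth f -> differentiable f x.
Proof. by move=> sf; apply: (sf [::]). Qed.

Lemma smooth_derivable f x v : smooth f -> derivable f x v.
Proof. by move=> sf; apply/diff_derivable/smooth_differentiable. Qed.

Lemma smooth_continuous f x : smooth f -> {for x, continuous f}.
Proof. by move=> sf; apply/differentiable_continuous/smooth_differentiable. Qed.

Lemma partialC i (j : 'I_n) f : smooth f -> partial i (partial j f) = partial j (partial i f).
Proof.
move=> sf; apply/funext => x; apply: schwarz => [y|y|y|y||].
- exact: smooth_derivable.
- exact: smooth_derivable.
- exact/smooth_derivable/smooth_partial.
- exact/smooth_derivable/smooth_partial.
- exact/smooth_continuous/smooth_partial/smooth_partial.
- exact/smooth_continuous/smooth_partial/smooth_partial.
Qed.

Lemma partial_partials i s f : smooth f ->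
  partial i (partials s f) = partials s (partial i f).
Proof.
elim: s => [//|j s IH] sf /=.
by rewrite partialC ?IH //; exact: smooth_partials.
Qed.

Lemma partialsC s t f : smooth f ->
  partials t (partials s f) = partials s (partials t f).
Proof.
elim: t => [//|i t IH] sf /=.
by rewrite IH // partial_partials //; exact: smooth_partials.
Qed.

Lemma partial_lincomb {I : Type} (r : seq I) (c : I -> R) (F : I -> 'rV[R]_n -> R) i :
  (forall j, smooth (F j)) ->
  partial i (lincomb r c F) = lincomb r c (fun j => partial i (F j)).
Proof.
move=> sF; apply/funext => x.
by case: (is_derive_lincomb r c F x (delta_mx 0 i) (fun j => smooth_derivable _ _ _ (sF j))).
Qed.

Lemma partials_lincomb {I : Type} (r : seq I) (c : I -> R) (F : I -> 'rV[R]_n -> R) s :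
  (forall j, smooth (F j)) ->
  partials s (lincomb r c F) = lincomb r c (fun j => partials s (F j)).
Proof.
move=> sF; elim: s => [//|i s IH] /=.
by rewrite IH partial_lincomb // => j; exact: smooth_partials.
Qed.

Lemma smooth_lincomb {I : Type} (r : seq I) (c : I -> R) (F : I -> 'rV[R]_n -> R) :
  (forall j, smooth (F j)) -> smooth (lincomb r c F).
Proof.
move=> sF s x; rewrite partials_lincomb //; apply: differentiable_lincomb => j.
exact/smooth_differentiable/smooth_partials.
Qed.

Definition multi_index_seq (alpha : 'I_n -> nat) : seq 'I_n :=
  flatten [seq nseq (alpha i) i | i <- enum 'I_n].

Lemma dmonE alpha f : dmon alpha f = partials (multi_index_seq alpha) f.
Proof.
have iter_partialE m i g : iter m (partial i) g = partials (nseq m i) g.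
  by elim: m => [//|m IH] /=; rewrite IH.
rewrite /dmon /multi_index_seq; elim: (enum 'I_n) => [//|i l IH] /=.
by rewrite IH iter_partialE /partials foldr_cat.
Qed.

Lemma smooth_dmon alpha f : smooth f -> smooth (dmon alpha f).
Proof. by rewrite dmonE; exact: smooth_partials. Qed.

Lemma dmonC alpha beta f : smooth f ->
  dmon alpha (dmon beta f) = dmon beta (dmon alpha f).
Proof. by move=> sf; rewrite !dmonE partialsC. Qed.

Lemma dmon_lincomb {I : Type} (r : seq I) (c : I -> R) (F : I -> 'rV[R]_n -> R) alpha :
  (forall j, smooth (F j)) ->
  dmon alpha (lincomb r c F) = lincomb r c (fun j => dmon alpha (F j)).
Proof.
move=> sF; rewrite dmonE partials_lincomb //.
by apply/funext => x; apply: eq_bigr => j _; rewrite dmonE.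
Qed.

End SmoothFunctions.

Section ConstantCoefficientOperators.
Context {R : realType} {n : nat}.
Implicit Types (L M : diffop R n) (f : 'rV[R]_n -> R).

Lemma apply_opE L f : apply_op L f = lincomb L (fun t => t.1) (fun t => dmon t.2 f).
Proof. by []. Qed.

Lemma smooth_apply_op L f : smooth f -> smooth (apply_op L f).
Proof. by move=> sf; rewrite apply_opE; apply: smooth_lincomb => t; exact: smooth_dmon. Qed.

Lemma smooth_op_pow L m f : smooth f -> smooth (op_pow L m f).
Proof. by move=> sf; elim: m => [//|m IH]; exact: smooth_apply_op. Qed.

Lemma apply_op_lincomb L {I : Type} (r : seq I) (c : I -> R) (F : I -> 'rV[R]_n -> R) :
  (forall j, smooth (F j)) ->
  apply_op L (lincomb r c F) = lincomb r c (fun j => apply_op L (F j)).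
Proof.
move=> sF; apply/funext => x; rewrite /apply_op /lincomb.
under eq_bigr => t _ do rewrite dmon_lincomb // /lincomb big_distrr.
rewrite exchange_big /=; apply: eq_bigr => j _; rewrite big_distrr /=.
by apply: eq_bigr => t _; rewrite mulrCA.
Qed.

Lemma apply_opC L M f : smooth f ->
  apply_op L (apply_op M f) = apply_op M (apply_op L f).
Proof.
move=> sf; rewrite [apply_op M f]apply_opE [apply_op L f]apply_opE.
rewrite !apply_op_lincomb => [|t|t]; try exact: smooth_dmon.
apply/funext => x; rewrite /lincomb /apply_op.
under eq_bigr => u _ do rewrite big_distrr.
rewrite exchange_big /=; apply: eq_bigr => t _; rewrite big_distrr /=.
by apply: eq_bigr => u _; rewrite mulrCA dmonC.
Qed.

Lemma apply_op_powC L M m f : smooth f ->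
  apply_op M (op_pow L m f) = op_pow L m (apply_op M f).
Proof.
move=> sf; elim: m => [//|m IH] /=.
by rewrite apply_opC ?IH //; exact: smooth_op_pow.
Qed.

End ConstantCoefficientOperators.

Section NegativeBinomial.
Context {R : comRingType}.

(* The coefficient of x^p in (1 + x)^-k. *)
Definition negbinom (k p : nat) : R := (-1) ^+ p * 'C(k + p - 1, p)%:R.

Lemma negbinom0 p : negbinom 0 p = (p == 0)%:R.
Proof.
case: p => [|p]; rewrite /negbinom; first by rewrite bin0 expr0 mulr1.
by rewrite add0n subn1 bin_small ?mulr0.
Qed.

Lemma negbinom_pascal k p : negbinom k.+1 p + negbinom k.+1 p.+1 = negbinom k p.+1.
Proof.
have succ_sub1 q : (q.+1 - 1 = q)%N by rewrite subn1.
by rewrite /negbinom !addSn !addnS !succ_sub1 binS natrD exprS; ring.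
Qed.

Lemma sum_negbinom_shift k l (u : nat -> R) :
  \sum_(p < l.+1) negbinom k.+1 p * u p + \sum_(p < l.+1) negbinom k.+1 p * u p.+1
  = \sum_(p < l.+1) negbinom k p * u p + negbinom k.+1 l * u l.+1.
Proof.
elim: l => [|l IH]; first by rewrite !big_ord1 /negbinom !bin0.
by rewrite !(big_ord_recr l.+1) /= addrACA IH -(negbinom_pascal k l); ring.
Qed.

End NegativeBinomial.

Section ParticularSolution.
Context {R : realType} {n : nat}.
Variables (A B D : diffop R n) (lambda : nat) (W : 'rV[R]_n -> R).
Hypothesis smooth_W : smooth W.
Hypothesis D_split : forall f, apply_op D f = apply_op A f \+ apply_op B f.
Hypothesis B_annihilates_W : op_pow B lambda.+1 W = (fun _ => 0).

Definition particular_term (p : nat) : 'rV[R]_n -> R :=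
  op_pow A (lambda - p) (op_pow B p W).

Definition particular_sol (m : nat) : 'rV[R]_n -> R :=
  lincomb (index_enum 'I_lambda.+1) (fun p : 'I_lambda.+1 => negbinom m p)
    (fun p => particular_term p).

Lemma smooth_particular_term p : smooth (particular_term p).
Proof. by do 2 apply: smooth_op_pow. Qed.

Lemma smooth_particular_sol m : smooth (particular_sol m).
Proof. by apply: smooth_lincomb => p; exact: smooth_particular_term. Qed.

Lemma particular_sol0 : particular_sol 0 = op_pow A lambda W.
Proof.
apply/funext => x; rewrite /particular_sol /lincomb big_ord_recl big1 => [|p _].
  by rewrite negbinom0 mul1r /particular_term subn0 addr0.
by rewrite negbinom0 mul0r.
Qed.

(* A sends the p-th term to u p and B sends it to u p.+1, so Pascal's rule
   telescopes; the leftover boundary term is B^(lambda+1) W = 0. *)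
Lemma apply_op_particular_sol m :
  apply_op D (particular_sol m.+1) = apply_op A (particular_sol m).
Proof.
apply/funext => x; rewrite D_split /= !apply_op_lincomb => [|p|p|p];
  try exact: smooth_particular_term.
rewrite /lincomb; pose u p := op_pow A (lambda.+1 - p) (op_pow B p W) x.
have sumA (c : nat -> R) : \sum_(p < lambda.+1) c p * apply_op A (particular_term p) x
    = \sum_(p < lambda.+1) c p * u p.
  by apply: eq_bigr => p _; rewrite /u subSn // -ltnS.
have sumB (c : nat -> R) : \sum_(p < lambda.+1) c p * apply_op B (particular_term p) x
    = \sum_(p < lambda.+1) c p * u p.+1.
  by apply: eq_bigr => p _; rewrite apply_op_powC ?subSS //; exact: smooth_op_pow.
rewrite !sumA sumB sum_negbinom_shift.
by rewrite /u subnn B_annihilates_W mulr0 addr0.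
Qed.

Lemma op_pow_particular_sol m :
  op_pow D m (particular_sol m) = op_pow A (lambda + m) W.
Proof.
elim: m => [|m IH]; first by rewrite addn0 particular_sol0.
have -> : op_pow D m.+1 (particular_sol m.+1)
    = op_pow D m (apply_op D (particular_sol m.+1)) by rewrite /op_pow iterSr.
rewrite apply_op_particular_sol -apply_op_powC; last exact: smooth_particular_sol.
by rewrite IH addnS.
Qed.

End ParticularSolution.

Theorem theorem4p1 (R : realType) (n : nat) (q : 'rV[R]_n -> R)
  (A B D : diffop R n) (lambda k : nat) (W : 'rV[R]_n -> R) :
  C1 q ->
  (forall f : 'rV[R]_n -> R, apply_op D f = apply_op A f \+ apply_op B f) ->
  smooth W ->
  op_pow A (lambda + k) W = q ->
  op_pow B lambda.+1 W = (fun _ => 0) ->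
  op_pow D k
    (fun x => \sum_(p < lambda.+1)
        (-1) ^+ p * ('C(k + p - 1, p))%:R
          * op_pow A (lambda - p) (op_pow B p W) x) = q.
Proof.
move=> _ D_split smooth_W <- B_annihilates_W.
exact: (op_pow_particular_sol A B D lambda W smooth_W D_split B_annihilates_W k).
Qed.
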